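(* Let $G$ be a simple connected graph and let $v$ be a real eigenvector of $\mathcal M$ with $\mathcal Mv=\mu v$, $\mu>0$. Let $S=\{i: v_i\ge0\}$ and let $\theta\in[0,\pi/2)$ be the angle between $|v|=(|v_1|,\dots,|v_n|)^{\mathsf T}$ and $\delta$, i.e. $\cos\theta=\delta^{\mathsf T}|v|/(\|v\|_2\|\delta\|_2)$. If $$\mu+1>4\,\frac{\mathrm{vol}\, S\,\mathrm{vol}\, \bar S}{(\mathrm{vol}\, V)^2}\,\frac{1}{\cos^2\theta},$$ then $Q(S)>0$.
   Context: $G=(V,E)$ is a finite, undirected, unweighted, simple connected graph with adjacency matrix $A$, degrees $d_i$, $D=\mathrm{Diag}(d_i)$, $\delta=(\sqrt{d_1},\dots,\sqrt{d_n})^{\mathsf T}$, $\mathrm{vol}\, S=\sum_{i\in S}d_i$, $\bar S=V\setminus S$, $\mathbb 1_S$ the characteristic vector of $S$. $\mathcal M=D^{-1/2}AD^{-1/2}-\frac{1}{\mathrm{vol}\, V}\delta\delta^{\mathsf T}$. The modularity of $S$ is $Q(S)=\mathbb 1_S^{\mathsf T}A\mathbb 1_S-(\mathrm{vol}\, S)^2/\mathrm{vol}\, V$. *)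

From HB Require Import structures.
From mathcomp Require Import all_boot all_order all_algebra.
Set Implicit Arguments. Unset Strict Implicit. Unset Printing Implicit Defensive.
Import Order.TTheory GRing.Theory Num.Theory.
Local Open Scope ring_scope.

Section Modularity.
Variables (R : rcfType) (n : nat) (e : rel 'I_n).

Definition adjmx : 'M[R]_n := \matrix_(i, j) (e i j)%:R.
Definition deg (i : 'I_n) : R := \sum_j adjmx i j.
Definition vol (S : {set 'I_n}) : R := \sum_(i in S) deg i.
Definition volV : R := vol [set: 'I_n].
Definition delta : 'cV[R]_n := \col_i Num.sqrt (deg i).
Definition Dmhalf : 'M[R]_n := \matrix_(i, j) (if i == j then (Num.sqrt (deg i))^-1 else 0).
Definition modmx : 'M[R]_n :=
  Dmhalf *m adjmx *m Dmhalf - (volV)^-1 *: (delta *m delta^T).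
Definition charvec (S : {set 'I_n}) : 'cV[R]_n := \col_i (i \in S)%:R.
Definition modularity (S : {set 'I_n}) : R :=
  ((charvec S)^T *m adjmx *m charvec S) 0 0 - (vol S) ^+ 2 / volV.
Definition norm2 (v : 'cV[R]_n) : R := Num.sqrt (\sum_i (v i 0) ^+ 2).
Definition absv (v : 'cV[R]_n) : 'cV[R]_n := map_mx Num.norm v.
Definition costheta (v : 'cV[R]_n) : R :=
  (delta^T *m absv v) 0 0 / (norm2 v * norm2 delta).
End Modularity.

Definition simple_connected (n : nat) (e : rel 'I_n) : Prop :=
  symmetric e /\ irreflexive e /\ (forall x y, connect e x y).

From mathcomp Require Import all_boot all_order all_algebra.
From mathcomp Require Import ring lra zify.
Import Order.TTheory GRing.Theory Num.Theory.
Local Open Scope ring_scope.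
Set Implicit Arguments. Unset Strict Implicit. Unset Printing Implicit Defensive.

(* The form of M + I is positive semidefinite, so for the eigenvector v of
   M + I with eigenvalue mu + 1 Cauchy-Schwarz gives
   (mu + 1) <v, y>^2 <= |v|^2 <y, (M + I) y> for every y.  Test it on
   y = D^{1/2} (vol V 1_S - vol S 1): then <y, (M + I) y> equals
   (vol V)^2 Q(S) + vol V vol S vol S', and since v is orthogonal to delta,
   <v, y> = vol V delta^T v_+ = vol V delta^T |v| / 2.  The hypothesis makes
   (mu + 1) <v, y>^2 exceed |v|^2 vol V vol S vol S', forcing Q(S) > 0. *)

Lemma psumr_gt0 (R : numDomainType) (I : finType) (F : I -> R) i :
  (forall j, 0 <= F j) -> 0 < F i -> 0 < \sum_j F j.
Proof.
move=> F_ge0 Fi_gt0; apply: (lt_le_trans Fi_gt0).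
by rewrite (bigD1 i) //= lerDl sumr_ge0.
Qed.

Section ShiftedModularityForm.
Variables (R : rcfType) (n : nat) (A : 'I_n -> 'I_n -> R) (s : 'I_n -> R).
Hypothesis A_sym : forall i j, A i j = A j i.
Hypothesis A_ge0 : forall i j, 0 <= A i j.
Hypothesis s_gt0 : forall i, 0 < s i.
Hypothesis s_sqr : forall i, s i ^+ 2 = \sum_j A i j.
Local Notation W := (\sum_i s i ^+ 2).
Hypothesis W_gt0 : 0 < W.

(* [s] plays the role of delta, so [W] is vol V, [modent] is M and
   [modI_apply] is M + I. *)
Definition modent i j := A i j / (s i * s j) - s i * s j / W.
Definition modI_apply (x : 'I_n -> R) i := \sum_j modent i j * x j + x i.
Definition modI_form x := \sum_i x i * modI_apply x i.

Let s_neq0 i : s i != 0. Proof. by rewrite gt_eqF. Qed.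
Let W_neq0 : W != 0. Proof. by rewrite gt_eqF. Qed.

Lemma sum_adj_l (f : 'I_n -> R) : \sum_i \sum_j A i j * f i = \sum_i s i ^+ 2 * f i.
Proof. by apply: eq_bigr => i _; rewrite -mulr_suml -s_sqr. Qed.

Lemma sum_adj_r (f : 'I_n -> R) : \sum_i \sum_j A i j * f j = \sum_j s j ^+ 2 * f j.
Proof.
rewrite exchange_big /= -sum_adj_l; apply: eq_bigr => j _; apply: eq_bigr => i _.
by rewrite A_sym.
Qed.

Lemma modI_apply_sym x y :
  \sum_i x i * modI_apply y i = \sum_i y i * modI_apply x i.
Proof.
have modentC i j : modent i j = modent j i by rewrite /modent A_sym (mulrC (s i)).
rewrite /modI_apply.
under eq_bigr => i _ do rewrite mulrDr mulr_sumr.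
under [RHS]eq_bigr => i _ do rewrite mulrDr mulr_sumr.
rewrite !big_split /= exchange_big /=; congr (_ + _).
  by apply: eq_bigr => j _; apply: eq_bigr => i _; rewrite modentC; ring.
by apply: eq_bigr => i _; ring.
Qed.

Lemma modI_applyE x i : modI_apply x i =
  (\sum_j A i j * (x j / s j)) / s i - s i * (\sum_j s j * x j) / W + x i.
Proof.
rewrite /modI_apply /modent.
under eq_bigr => j _ do rewrite mulrBl.
rewrite sumrB; congr (_ - _ + _).
  by rewrite mulr_suml; apply: eq_bigr => j _; field; rewrite ?s_neq0 ?W_neq0.
by rewrite mulr_sumr mulr_suml; apply: eq_bigr => j _; field.
Qed.

Lemma modI_apply_s i : modI_apply s i = s i.
Proof.
rewrite modI_applyE.
under eq_bigr => j _ do rewrite divff // mulr1.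
rewrite -s_sqr; under eq_bigr => j _ do rewrite -expr2.
by field; rewrite ?s_neq0 ?W_neq0.
Qed.

(* Rewriting the form in w = D^{-1/2} x turns it into a weighted sum of
   squares (w_i + w_j - 2c)^2 over the edges, minus a term minimised at
   c = <s, x> / W. *)
Lemma modI_form_ge0 x : 0 <= modI_form x.
Proof.
pose w j := x j / s j.
pose X := \sum_j s j * x j.
pose c := X / W.
pose Q := \sum_i w i * (\sum_j A i j * w j).
have formE : modI_form x = Q - X ^+ 2 / W + \sum_i x i ^+ 2.
  rewrite /modI_form.
  transitivity (\sum_i (w i * (\sum_j A i j * w j) - (s i * x i) * (X / W) + x i ^+ 2)).
    by apply: eq_bigr => i _; rewrite modI_applyE /w /X; field; rewrite ?s_neq0 ?W_neq0.
  by rewrite big_split sumrB /= -mulr_suml /Q /X expr2 mulrA.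
have sos : \sum_i \sum_j A i j * (w i + w j - 2 * c) ^+ 2 =
    2 * (\sum_i x i ^+ 2 - 4 * c * X + 2 * c ^+ 2 * W) + 2 * Q.
  have -> : \sum_i \sum_j A i j * (w i + w j - 2 * c) ^+ 2 =
      \sum_i \sum_j A i j * (w i ^+ 2 - 4 * c * w i + 2 * c ^+ 2) +
      \sum_i \sum_j A i j * (w j ^+ 2 - 4 * c * w j + 2 * c ^+ 2) + 2 * Q.
    rewrite /Q mulr_sumr -!big_split /=; apply: eq_bigr => i _.
    by rewrite mulr_sumr mulr_sumr -!big_split /=; apply: eq_bigr => j _; ring.
  rewrite sum_adj_l sum_adj_r.
  have -> : \sum_i s i ^+ 2 * (w i ^+ 2 - 4 * c * w i + 2 * c ^+ 2) =
      \sum_i x i ^+ 2 - 4 * c * X + 2 * c ^+ 2 * W.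
    rewrite /X !mulr_sumr -sumrB -big_split /=; apply: eq_bigr => i _.
    by rewrite /w; field; rewrite ?s_neq0 ?W_neq0.
  ring.
have sos_ge0 : 0 <= \sum_i \sum_j A i j * (w i + w j - 2 * c) ^+ 2.
  by do 2![apply: sumr_ge0 => ? _]; rewrite mulr_ge0 ?sqr_ge0.
have cX : c * X = X ^+ 2 / W by rewrite /c; field.
have c2W : c ^+ 2 * W = X ^+ 2 / W by rewrite /c; field.
have X2W_ge0 : 0 <= X ^+ 2 / W by rewrite divr_ge0 ?sqr_ge0 ?ltW.
rewrite formE; lra.
Qed.

(* Cauchy-Schwarz for the semi-inner product of M + I, after projecting y
   orthogonally to the eigenvector v. *)
Lemma eigvec_dot_sqr_le (lam : R) v y :
  (forall i, modI_apply v i = lam * v i) -> 0 < \sum_i v i ^+ 2 ->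
  lam * (\sum_i v i * y i) ^+ 2 <= (\sum_i v i ^+ 2) * modI_form y.
Proof.
move=> eig N_gt0.
set N := \sum_i v i ^+ 2 in N_gt0 *; set B := \sum_i v i * y i.
have N_neq0 : N != 0 by rewrite gt_eqF.
pose t := B / N.
pose z i := y i - t * v i.
have applyz i : modI_apply z i = modI_apply y i - t * (lam * v i).
  rewrite -eig /modI_apply mulrDr mulr_sumr opprD addrACA -sumrB.
  by congr (_ + _); apply: eq_bigr => j _; rewrite /z; ring.
have vPy : \sum_i v i * modI_apply y i = lam * B.
  by rewrite modI_apply_sym /B mulr_sumr; apply: eq_bigr => i _; rewrite eig; ring.
have formz : modI_form z = modI_form y - lam * (B ^+ 2 / N).
  rewrite /modI_form.
  transitivity (\sum_i (y i * modI_apply y i - t * (v i * modI_apply y i)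
      - t * lam * (v i * y i) + t ^+ 2 * lam * v i ^+ 2)).
    by apply: eq_bigr => i _; rewrite applyz /z; ring.
  by rewrite big_split /= !sumrB -!mulr_sumr vPy -/B -/N /t; field.
have := modI_form_ge0 z; rewrite formz => ge0.
have -> : N * modI_form y = N * (modI_form y - lam * (B ^+ 2 / N)) + lam * B ^+ 2.
  by field.
by rewrite lerDr mulr_ge0 // ltW.
Qed.

Lemma eigvec_orth_s (lam : R) v :
  (forall i, modI_apply v i = lam * v i) -> lam != 1 -> \sum_i s i * v i = 0.
Proof.
move=> eig lam_neq1; have := modI_apply_sym s v.
under eq_bigr => i _ do rewrite eig mulrCA.
under [in RHS]eq_bigr => i _ do rewrite modI_apply_s mulrC.
rewrite -mulr_sumr => /eqP; rewrite -subr_eq0 -{2}[\sum_i _]mul1r -mulrBl.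
by rewrite mulf_eq0 subr_eq0 (negbTE lam_neq1) => /eqP.
Qed.

Section TestVector.
Variable S : {set 'I_n}.
Local Notation b i := ((i \in S)%:R : R).
Local Notation VS := (\sum_i s i ^+ 2 * b i).

Lemma modI_form_test :
  modI_form (fun i => s i * (W * b i - VS)) =
  W ^+ 2 * (\sum_i b i * (\sum_j A i j * b j) - VS ^+ 2 / W) + W * VS * (W - VS).
Proof.
set y := fun i => _.
pose a i := \sum_j A i j * b j.
have sy : \sum_j s j * y j = 0.
  transitivity (W * VS - VS * W); last by ring.
  rewrite [W * _]mulr_sumr [VS * _]mulr_sumr -sumrB.
  by apply: eq_bigr => j _; rewrite /y; ring.
have Ay i : \sum_j A i j * (y j / s j) = W * a i - VS * s i ^+ 2.
  rewrite s_sqr /a !mulr_sumr -sumrB; apply: eq_bigr => j _.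
  by rewrite /y; field; rewrite ?s_neq0 ?W_neq0.
rewrite /modI_form.
transitivity (\sum_i (W ^+ 2 * (b i * a i) - W * VS * a i
    + (W ^+ 2 - 3 * W * VS) * (s i ^+ 2 * b i) + 2 * VS ^+ 2 * s i ^+ 2)).
  apply: eq_bigr => i _; rewrite modI_applyE Ay sy /y.
  by case: (i \in S); rewrite ?mulr1n ?mulr0n; field; rewrite ?s_neq0 ?W_neq0.
rewrite !big_split /= sumrN -!mulr_sumr.
have -> : \sum_i a i = VS by rewrite /a sum_adj_r.
by field.
Qed.

Lemma dot_test v : \sum_i v i * (s i * (W * b i - VS)) =
  W * (\sum_i s i * v i * b i) - VS * (\sum_i s i * v i).
Proof.
rewrite [W * _]mulr_sumr [VS * _]mulr_sumr -sumrB.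
by apply: eq_bigr => i _; ring.
Qed.

Lemma sum_abs_split v : (forall i, (i \in S) = (0 <= v i)) ->
  \sum_i s i * `|v i| = 2 * (\sum_i s i * v i * b i) - \sum_i s i * v i.
Proof.
move=> memS; rewrite [2 * _]mulr_sumr -sumrB; apply: eq_bigr => i _.
rewrite memS; case: (lerP 0 (v i)) => [v_ge0|v_lt0].
  by rewrite ger0_norm // mulr1n; ring.
by rewrite ltr0_norm // mulr0n; ring.
Qed.

Lemma modularity_gt0 (mu : R) (v : 'I_n -> R) :
  (forall i, \sum_j modent i j * v j = mu * v i) ->
  0 < mu -> (forall i, (i \in S) = (0 <= v i)) -> 0 < \sum_i v i ^+ 2 ->
  4 * (VS * (W - VS)) * (\sum_i v i ^+ 2) < (mu + 1) * (\sum_i s i * `|v i|) ^+ 2 * W ->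
  0 < \sum_i b i * (\sum_j A i j * b j) - VS ^+ 2 / W.
Proof.
move=> eig mu_gt0 memS N_gt0 hyp.
set N := \sum_i v i ^+ 2 in N_gt0 hyp.
set Q := _ - _.
have eigI i : modI_apply v i = (mu + 1) * v i.
  by rewrite /modI_apply eig mulrDl mul1r.
have orth : \sum_i s i * v i = 0.
  by apply: (eigvec_orth_s eigI); rewrite gt_eqF // ltrDr.
have cs := eigvec_dot_sqr_le (fun i => s i * (W * b i - VS)) eigI N_gt0.
rewrite modI_form_test dot_test orth mulr0 subr0 -/Q -/N mulrDr in cs.
rewrite (sum_abs_split memS) orth subr0 in hyp.
set Bs := \sum_i s i * v i * b i in hyp cs.
have hypW : 4 * (N * (W * VS * (W - VS))) < 4 * ((mu + 1) * (W * Bs) ^+ 2).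
  have -> : 4 * (N * (W * VS * (W - VS))) = W * (4 * (VS * (W - VS)) * N) by ring.
  have -> : 4 * ((mu + 1) * (W * Bs) ^+ 2) = W * ((mu + 1) * (2 * Bs) ^+ 2 * W).
    by ring.
  by rewrite ltr_pM2l.
rewrite -(pmulr_rgt0 _ (mulr_gt0 N_gt0 (exprn_gt0 2 W_gt0))) -mulrA.
move: hypW cs; move: ((mu + 1) * _) (N * (W * VS * _)) (N * (W ^+ 2 * Q)).
by move=> x y z; lra.
Qed.

End TestVector.

End ShiftedModularityForm.

Section GraphQuantities.
Variables (R : rcfType) (n : nat) (e : rel 'I_n).

Lemma modmx_entry i j :
  modmx R e i j = adjmx R e i j / (Num.sqrt (deg R e i) * Num.sqrt (deg R e j))
     - Num.sqrt (deg R e i) * Num.sqrt (deg R e j) / volV R e.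
Proof.
have Dmhalf_diag : Dmhalf R e = diag_mx (\row_k (Num.sqrt (deg R e k))^-1).
  by apply/matrixP => a b; rewrite !mxE; case: (a =P b) => [->|_];
     rewrite ?mulr1n ?mulr0n.
by rewrite /modmx Dmhalf_diag mul_mx_diag mul_diag_mx !mxE big_ord1 !mxE invfM; ring.
Qed.

Lemma deg_ge0 i : 0 <= deg R e i.
Proof. by apply: sumr_ge0 => j _; rewrite mxE ler0n. Qed.

Lemma vol_sum (S : {set 'I_n}) :
  vol R e S = \sum_i Num.sqrt (deg R e i) ^+ 2 * (i \in S)%:R.
Proof.
rewrite /vol big_mkcond /=; apply: eq_bigr => i _.
by rewrite sqr_sqrtr ?deg_ge0 //; case: (i \in S); rewrite ?mulr1 ?mulr0.
Qed.

Lemma volV_sum : volV R e = \sum_i Num.sqrt (deg R e i) ^+ 2.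
Proof.
by rewrite /volV vol_sum; apply: eq_bigr => i _; rewrite in_setT mulr1.
Qed.

Lemma volC_sum (S : {set 'I_n}) : vol R e (~: S) = volV R e - vol R e S.
Proof.
rewrite volV_sum !vol_sum -sumrB; apply: eq_bigr => i _.
by rewrite in_setC; case: (i \in S); rewrite ?mulr1n ?mulr0n; ring.
Qed.

Lemma modularity_sum (S : {set 'I_n}) : modularity R e S =
  \sum_i (i \in S)%:R * \sum_j adjmx R e i j * (j \in S)%:R - vol R e S ^+ 2 / volV R e.
Proof.
congr (_ - _); rewrite !mxE; under eq_bigr => j _ do rewrite !mxE mulr_suml.
rewrite exchange_big /=; apply: eq_bigr => i _; rewrite mulr_sumr.
by apply: eq_bigr => j _; rewrite !mxE; ring.
Qed.

Lemma costhetaE (v : 'cV[R]_n) : costheta e v =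
  (\sum_i Num.sqrt (deg R e i) * `|v i 0|) /
  (Num.sqrt (\sum_i v i 0 ^+ 2) * Num.sqrt (\sum_i Num.sqrt (deg R e i) ^+ 2)).
Proof.
rewrite /costheta /norm2 mxE; congr (_ / (_ * Num.sqrt _)).
  by apply: eq_bigr => j _; rewrite !mxE.
by apply: eq_bigr => j _; rewrite mxE.
Qed.

Lemma modmx_eq0 : irreflexive e -> (n <= 1)%N -> modmx R e = 0.
Proof.
move=> irr n_le1.
have all_eq (a b : 'I_n) : a = b.
  by apply: ord_inj; have := ltn_ord a; have := ltn_ord b; lia.
have deg0 i : deg R e i = 0 by apply: big1 => j _; rewrite (all_eq j i) mxE irr.
apply/matrixP => i j; rewrite modmx_entry !deg0 sqrtr0 !mxE.
by rewrite !mul0r invr0 !mulr0 subr0.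
Qed.

Lemma deg_gt0 i : simple_connected e -> (1 < n)%N -> 0 < deg R e i.
Proof.
move=> [_ [_ conn]] n_gt1.
pose j := if nat_of_ord i == 0%N then Ordinal n_gt1 else Ordinal (ltnW n_gt1).
have j_neq_i : j != i.
  rewrite /j; case: (nat_of_ord i =P 0%N) => i0;
    by apply/eqP => /(congr1 (@nat_of_ord _)) /=; lia.
case/connectP: (conn i j) => [[|k p] /= path_ij last_j].
  by rewrite last_j eqxx in j_neq_i.
case/andP: path_ij => e_ik _.
by apply: (@psumr_gt0 _ _ _ k) => [l|]; rewrite mxE ?ler0n // e_ik.
Qed.

Lemma modmx_eigen_gt1 (v : 'cV[R]_n) mu : irreflexive e -> v != 0 -> mu != 0 ->
  modmx R e *m v = mu *: v -> (1 < n)%N.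
Proof.
move=> irr v_neq0 mu_neq0; rewrite ltnNge => eig; apply/negP => n_le1.
move: eig; rewrite modmx_eq0 // mul0mx => /esym/eqP.
by rewrite scaler_eq0 (negbTE mu_neq0) (negbTE v_neq0).
Qed.

End GraphQuantities.

Lemma cV_neq0_entry (R : nzRingType) (n : nat) (v : 'cV[R]_n) :
  v != 0 -> exists i, v i 0 != 0.
Proof.
move=> v_neq0; apply/existsP; apply: contraNT v_neq0 => /existsPn v0.
by apply/eqP/matrixP => i k; rewrite ord1 mxE; apply/eqP/negPn/v0.
Qed.

Lemma cos_sqr_ltr (R : rcfType) (a T N W m : R) : 0 < T -> 0 < N -> 0 < W ->
  a / W ^+ 2 / (T / (Num.sqrt N * Num.sqrt W)) ^+ 2 < m -> a * N < m * T ^+ 2 * W.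
Proof.
move=> T_gt0 N_gt0 W_gt0.
rewrite expr_div_n exprMn !sqr_sqrtr ?ltW //.
have -> : a / W ^+ 2 / (T ^+ 2 / (N * W)) = a * N / (T ^+ 2 * W).
  by field; rewrite !gt_eqF.
by rewrite ltr_pdivrMr ?mulr_gt0 ?exprn_gt0 // mulrA.
Qed.

Theorem theorem5p2 (R : rcfType) (n : nat) (e : rel 'I_n)
  (hG : simple_connected e)
  (v : 'cV[R]_n) (mu : R)
  (hv : v != 0) (heig : modmx R e *m v = mu *: v) (hmu : 0 < mu) :
  let S := [set i | 0 <= v i 0] in
  4 * (vol R e S * vol R e (~: S)) / (volV R e) ^+ 2 / (costheta e v) ^+ 2 < mu + 1 ->
  0 < modularity R e S.
Proof.
move=> S hyp; have [e_sym [e_irr _]] := hG.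
have [i0 vi0_neq0] := cV_neq0_entry hv.
have n_gt1 := modmx_eigen_gt1 e_irr hv (lt0r_neq0 hmu) heig.
pose s i := Num.sqrt (deg R e i).
have s_gt0 i : 0 < s i by rewrite sqrtr_gt0 deg_gt0.
have s_sqr i : s i ^+ 2 = \sum_j adjmx R e i j by rewrite sqr_sqrtr ?deg_ge0.
have W_gt0 : 0 < \sum_i s i ^+ 2.
  by apply: (@psumr_gt0 _ _ _ i0) => [j|]; rewrite ?sqr_ge0 ?exprn_gt0.
have N_gt0 : 0 < \sum_i v i 0 ^+ 2.
  apply: (@psumr_gt0 _ _ _ i0) => [j|]; first exact: sqr_ge0.
  by rewrite lt0r sqrf_eq0 vi0_neq0 sqr_ge0.
have T_gt0 : 0 < \sum_i s i * `|v i 0|.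
  apply: (@psumr_gt0 _ _ _ i0) => [j|]; first by rewrite mulr_ge0 ?normr_ge0 // ltW.
  by rewrite mulr_gt0 ?normr_gt0.
have eig i : \sum_j modent (adjmx R e) s i j * v j 0 = mu * v i 0.
  have := congr1 (fun M : 'cV_n => M i 0) heig; rewrite /= !mxE => <-.
  by apply: eq_bigr => j _; rewrite modmx_entry volV_sum.
rewrite costhetaE volC_sum !vol_sum volV_sum in hyp.
rewrite modularity_sum vol_sum volV_sum.
apply: (modularity_gt0 _ _ s_gt0 s_sqr W_gt0 eig hmu) => //.
- by move=> i j; rewrite !mxE e_sym.
- by move=> i j; rewrite mxE ler0n.
- by move=> i; rewrite inE.
- exact: cos_sqr_ltr hyp.
Qed.
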